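(* For GP-EI with BSPMI and any $t\in\mathbb{N}$, when $E^r(t)$ holds, $$r_t\le\big(c_\mu(t)+\phi(0)+2\beta_t^{1/2}\big)\sigma_{t-1}(\mathbf{x}_t)+c_\alpha\beta_t^{1/2}\sigma_{t-1}([\mathbf{x}^*]_t)+\frac{1}{t^2},$$ where $c_\mu(t)=\log^{1/2}\!\big(\frac{t-1+\sigma^2}{2\pi\phi^2(0)\sigma^2}\big)$ and $c_\alpha=1.328$.
   Context: Setting: $d\ge1$, $r>0$, $C\subseteq[0,r]^d$ compact; $k$ positive semidefinite kernel with $k(\mathbf{x},\mathbf{x}')\le1$, $k(\mathbf{x},\mathbf{x})=1$ on $C$. $f$ is a sample path of $GP(0,k)$, Lipschitz with constant $L\ge1/(rd)$ in $\ell_1$-norm; $\mathbf{x}^*\in\arg\min_Cf$. Observations $y_t=f(\mathbf{x}_t)+\epsilon_t$, $\epsilon_t$ i.i.d. $\mathcal{N}(0,\sigma^2)$, $\sigma>0$. Posterior $\mu_t(\mathbf{x})=\mathbf{k}_t(\mathbf{x})^T(\mathbf{K}_t+\sigma^2\mathbf{I})^{-1}\mathbf{y}_{1:t}$, $\sigma_t^2(\mathbf{x})=1-\mathbf{k}_t(\mathbf{x})^T(\mathbf{K}_t+\sigma^2\mathbf{I})^{-1}\mathbf{k}_t(\mathbf{x})$ ($\mathbf{K}_t=[k(\mathbf{x}_i,\mathbf{x}_j)]_{i,j\le t}$, $\mathbf{k}_t(\mathbf{x})=[k(\mathbf{x}_i,\mathbf{x})]_{i\le t}$). BSPMI incumbent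 $\xi_t^+=\mu_t^m=\min_{i\le t}\mu_t(\mathbf{x}_i)$. $EI_t(\mathbf{x})=(\xi_t^+-\mu_t(\mathbf{x}))\Phi(z_t(\mathbf{x}))+\sigma_t(\mathbf{x})\phi(z_t(\mathbf{x}))$, $z_t=(\xi_t^+-\mu_t)/\sigma_t$, $\phi,\Phi$ standard normal pdf/cdf; GP-EI picks $\mathbf{x}_t\in\arg\max_CEI_{t-1}$. $r_t=f(\mathbf{x}_t)-f(\mathbf{x}^* )$. Discretization: $\mathbb{C}_t\subseteq C$ finite, $|\mathbb{C}_t|=(Lrdt^2)^d$, $\|\mathbf{x}-[\mathbf{x}]_t\|_1\le1/(Lt^2)$ for all $\mathbf{x}\in C$, $[\mathbf{x}]_t$ a closest point of $\mathbb{C}_t$. With $\delta\in(0,1)$, $\pi_t=\pi^2t^2/6$, $\beta_t=2\log(8|\mathbb{C}_t|\pi_t/\delta)$. $E^r(t)$ is the event that $|f(\mathbf{x})-\mu_{t-1}(\mathbf{x})|\le\beta_t^{1/2}\sigma_{t-1}(\mathbf{x})$ holds for all $\mathbf{x}\in\mathbb{C}_t$, for $\mathbf{x}=\mathbf{x}_t$, and for $\mathbf{x}=\mathbf{x}_{t-1}$. *)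

From HB Require Import structures.
From mathcomp Require Import all_boot all_order all_algebra.
From mathcomp Require Import all_classical all_reals all_analysis.
Set Implicit Arguments. Unset Strict Implicit. Unset Printing Implicit Defensive.
Import Order.TTheory GRing.Theory Num.Theory.
Import numFieldNormedType.Exports.
Local Open Scope classical_set_scope.
Local Open Scope ring_scope.

Section GPEI.
Context {R : realType} {d : nat}.

Notation pt := 'rV[R]_d.

Definition l1dist (x x' : pt) : R := \sum_(i < d) `|x 0 i - x' 0 i|.

Definition phi (z : R) : R := normal_pdf 0 1 z.
Definition Phi (z : R) : R := fine (normal_prob 0 1 `]-oo, z]).

Definition psd_kernel (k : pt -> pt -> R) : Prop :=
  (forall x x', k x x' = k x' x) /\
  (forall (n : nat) (X : 'I_n -> pt) (c : 'I_n -> R),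
      0 <= \sum_(i < n) \sum_(j < n) c i * c j * k (X i) (X j)).

(* Data after n observations: points X 1, ..., X n, observations y 1, ..., y n *)
Definition kvec (k : pt -> pt -> R) (X : nat -> pt) (n : nat) (x : pt) : 'cV[R]_n :=
  \col_(i < n) k (X i.+1) x.
Definition Kmat (k : pt -> pt -> R) (X : nat -> pt) (n : nat) : 'M[R]_n :=
  \matrix_(i < n, j < n) k (X i.+1) (X j.+1).
Definition yvec (y : nat -> R) (n : nat) : 'cV[R]_n := \col_(i < n) y i.+1.

Definition post_mean k (sigma : R) X y n (x : pt) : R :=
  (((kvec k X n x)^T *m invmx (Kmat k X n + (sigma ^+ 2)%:M)) *m yvec y n) 0 0.
Definition post_var k (sigma : R) X n (x : pt) : R :=
  1 - (((kvec k X n x)^T *m invmx (Kmat k X n + (sigma ^+ 2)%:M)) *m kvec k X n x) 0 0.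
Definition post_sd k sigma X n x : R := Num.sqrt (post_var k sigma X n x).

(* BSPMI incumbent xi_n^+ = min_{1<=i<=n} mu_n(x_i)   (used for n >= 1) *)
Definition incumbent k sigma X y n : R :=
  \big[Num.min/post_mean k sigma X y n (X 1%N)]_(1 <= i < n.+1)
     post_mean k sigma X y n (X i).

Definition EI k sigma X y n (x : pt) : R :=
  let xi := incumbent k sigma X y n in
  let m := post_mean k sigma X y n x in
  let s := post_sd k sigma X n x in
  let z := (xi - m) / s in
  (xi - m) * Phi z + s * phi z.

Definition pi_t (t : nat) : R := pi ^+ 2 * (t%:R) ^+ 2 / 6.
Definition beta (card : nat) (delta : R) (t : nat) : R :=
  2 * ln (8 * card%:R * pi_t t / delta).

Definition c_mu (sigma : R) (t : nat) : R :=
  Num.sqrt (ln ((t%:R - 1 + sigma ^+ 2) / (2 * pi * phi 0 ^+ 2 * sigma ^+ 2))).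
Definition c_alpha : R := 1328%:R / 1000%:R.

End GPEI.

From HB Require Import structures.
From mathcomp Require Import all_boot all_order all_algebra.
From mathcomp Require Import all_classical all_reals all_analysis.
From mathcomp Require Import ring lra.
Set Implicit Arguments. Unset Strict Implicit. Unset Printing Implicit Defensive.
Import Order.TTheory GRing.Theory Num.Theory.
Import numFieldNormedType.Exports.
Local Open Scope classical_set_scope.
Local Open Scope ring_scope.

(* Split r_t at [x^*]_t; write mu and s for the posterior mean and deviation
   at time t - 1, and b = beta_t^(1/2).  Lipschitz continuity gives
   f([x^*]_t) - min_C f <= 1/t^2, and on E^r(t)
   f(x_t) - f([x^*]_t) <= mu(x_t) - mu([x^*]_t) + b (s(x_t) + s([x^*]_t)).
   The mean gap goes through the incumbent xi and EI([x^*]_t) <= EI(x_t):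
   - xi - mu([x^*]_t) <= EI([x^*]_t) + 0.328 b s([x^*]_t) by a Gaussian tail
     bound, valid since beta_t >= 5/2;
   - mu(x_t) - xi + EI(x_t) <= (c_mu(t) + phi(0)) s(x_t), since EI(x_t) is at
     least the EI s(x_m) phi(0) at the point x_m realising the incumbent, and
     s(x_m)^2 >= sigma^2 / (t - 1 + sigma^2). *)

Lemma sqr_sum_le_card (R : realDomainType) n (u : 'I_n -> R) :
  (\sum_i u i) ^+ 2 <= n%:R * \sum_i u i ^+ 2.
Proof.
elim: n u => [|n IHn] u; first by rewrite !big_ord0 expr0n /= mul0r.
rewrite !big_ord_recr /= -natr1.
have := IHn (fun i => u (widen_ord (leqnSn n) i)).
set S := \sum_(i < n) _; set Q := \sum_(i < n) _; set v := u ord_max => IHS.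
have Q0 : 0 <= Q by rewrite sumr_ge0 // => i _; rewrite sqr_ge0.
have [n0|n_gt0] := posnP n.
  have S0 : S = 0.
    by apply/eqP; rewrite -sqrf_eq0 eq_le sqr_ge0 andbT; move: IHS; rewrite n0 mul0r.
  by rewrite S0 n0; lra.
have n_gt0' : 0 < n%:R :> R by rewrite ltr0n.
have cross : 2 * S * v <= Q + n%:R * v ^+ 2.
  by rewrite -(ler_pM2l n_gt0'); have := sqr_ge0 (S - n%:R * v); nra.
nra.
Qed.

Lemma quad_form_add_scalar (R : comPzRingType) n (K : 'M[R]_n) (u : 'cV_n) (s : R) :
  ((u^T *m (K + s%:M)) *m u) 0 0 =
    \sum_i \sum_j u i 0 * u j 0 * K i j + s * \sum_i u i 0 ^+ 2.
Proof.
rewrite mxE.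
transitivity (\sum_j \sum_i (u i 0 * u j 0 * K i j + s * ((i == j)%:R * u i 0 * u j 0))).
  apply: eq_bigr => j _; rewrite mxE mulr_suml; apply: eq_bigr => i _.
  by rewrite !mxE; case: eqP => [->|_] /=; ring.
under eq_bigr do rewrite big_split /=.
rewrite big_split /= exchange_big /=; congr (_ + _).
rewrite exchange_big /= mulr_sumr; apply: eq_bigr => i _.
rewrite (bigD1 i) //= eqxx big1 ?addr0; first by rewrite mul1r expr2.
by move=> j /negPf; rewrite eq_sym => ->; rewrite !mul0r mulr0.
Qed.

Section PosteriorVariance.
Variables (R : realType) (d : nat) (k : 'rV[R]_d -> 'rV[R]_d -> R).
Hypothesis kpsd : psd_kernel k.

Lemma psd_kernel_cons_ge0 n (Y : 'I_n -> 'rV[R]_d) (c : 'I_n -> R) x (lam mu : R) :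
  0 <= mu ^+ 2 * k x x + 2 * lam * mu * (\sum_i c i * k (Y i) x)
       + lam ^+ 2 * \sum_i \sum_j c i * c j * k (Y i) (Y j).
Proof.
have [ksym kpos] := kpsd.
have := kpos n.+1 (fun i => if unlift ord0 i is Some j then Y j else x)
  (fun i => if unlift ord0 i is Some j then lam * c j else mu).
rewrite big_ord_recl big_ord_recl unlift_none.
under eq_bigr do rewrite liftK.
under [X in _ <= _ + X]eq_bigr do rewrite big_ord_recl liftK unlift_none.
under [X in _ <= _ + X]eq_bigr => i _ do under eq_bigr do rewrite !liftK.
rewrite big_split /=.
set S1 := \sum_(i < n) _; set S2 := \sum_(i < n) _; set S3 := \sum_(i < n) _.
have -> : S1 = lam * mu * \sum_i c i * k (Y i) x.
  by rewrite /S1 mulr_sumr; apply: eq_bigr => i _; rewrite ksym; ring.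
have -> : S2 = lam * mu * \sum_i c i * k (Y i) x.
  by rewrite /S2 mulr_sumr; apply: eq_bigr => i _; ring.
have -> : S3 = lam ^+ 2 * \sum_i \sum_j c i * c j * k (Y i) (Y j).
  rewrite /S3 mulr_sumr; apply: eq_bigr => i _; rewrite mulr_sumr.
  by apply: eq_bigr => j _; ring.
by move/le_trans; apply; rewrite le_eqVlt; apply/orP; left; apply/eqP; ring.
Qed.

Lemma psd_kernel_geN1 x y : k y y = 1 -> k x x = 1 -> -1 <= k y x.
Proof.
move=> kyy kxx.
have := psd_kernel_cons_ge0 (fun _ : 'I_1 => y) (fun _ => 1) x 1 1.
by rewrite !big_ord1 kyy kxx; lra.
Qed.

Lemma Kmat_psd X n (u : 'cV[R]_n) :
  0 <= \sum_i \sum_j u i 0 * u j 0 * Kmat k X n i j.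
Proof.
under eq_bigr do under eq_bigr do rewrite mxE.
exact: (proj2 kpsd) n (fun i => X i.+1) (fun i => u i 0).
Qed.

Lemma Kmat_add_scalar_unit X n (s : R) : 0 < s -> Kmat k X n + s%:M \in unitmx.
Proof.
move=> s_gt0; rewrite -row_free_unit; apply: inj_row_free => v vM0.
have := quad_form_add_scalar (Kmat k X n) v^T s.
rewrite trmxK vM0 mul0mx mxE => /esym quad0.
have psd_v := Kmat_psd X v^T.
have norm_v0 : \sum_i v^T i 0 ^+ 2 = 0.
  apply/eqP; rewrite eq_le sumr_ge0 ?andbT => [|i _]; last exact: sqr_ge0.
  rewrite -(ler_pM2l s_gt0) mulr0; lra.
apply/rowP => i; rewrite mxE.
have /eqP := psumr_eq0P (fun i _ => sqr_ge0 (v^T i 0)) norm_v0 (i := i) isT.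
by rewrite mxE sqrf_eq0 => /eqP.
Qed.

Hypothesis kle1 : forall x x', k x x' <= 1.

(* With a = (K + sigma^2 I)^-1 k(x) and T = k(x)^T a, we have
   T = a^T K a + sigma^2 |a|^2, positivity of the kernel on (x, X) gives
   T^2 <= a^T K a, and |k| <= 1 gives T^2 <= n |a|^2; hence
   T <= n / (n + sigma^2). *)
Lemma post_var_bounds sigma X n x : 0 < sigma ->
  (forall j, (1 <= j <= n)%N -> k (X j) (X j) = 1) -> k x x = 1 ->
  sigma ^+ 2 / (n%:R + sigma ^+ 2) <= post_var k sigma X n x <= 1.
Proof.
move=> sigma_gt0 kX kxx.
have s2_gt0 : 0 < sigma ^+ 2 by rewrite exprn_gt0.
set M := Kmat k X n + (sigma ^+ 2)%:M.
set a := invmx M *m kvec k X n x.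
set T := ((kvec k X n x)^T *m a) 0 0.
have -> : post_var k sigma X n x = 1 - T by rewrite /post_var -mulmxA.
have Ma : M *m a = kvec k X n x.
  by rewrite mulmxA mulmxV ?mul1mx //; apply: Kmat_add_scalar_unit.
have MT : M^T = M by apply/matrixP => i j; rewrite !mxE (proj1 kpsd) eq_sym.
set A := \sum_i \sum_j a i 0 * a j 0 * Kmat k X n i j.
set S := \sum_i a i 0 ^+ 2.
have TE : T = A + sigma ^+ 2 * S by rewrite /T -Ma trmx_mul MT quad_form_add_scalar.
have T_kvec : T = \sum_i a i 0 * k (X i.+1) x.
  by rewrite /T mxE; apply: eq_bigr => i _; rewrite !mxE mulrC.
have TA : T ^+ 2 <= A.
  have := psd_kernel_cons_ge0 (fun i => X i.+1) (fun i => a i 0) x 1 (- T).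
  rewrite -T_kvec kxx.
  have -> : \sum_i \sum_j a i 0 * a j 0 * k (X i.+1) (X j.+1) = A.
    by apply: eq_bigr => i _; apply: eq_bigr => j _; rewrite [Kmat _ _ _ _ _]mxE.
  by move=> cons_ge0; nra.
have TS : T ^+ 2 <= n%:R * S.
  rewrite T_kvec; apply: le_trans (sqr_sum_le_card _) _; rewrite ler_wpM2l ?ler0n //.
  apply: ler_sum => i _; rewrite exprMn ler_piMr ?sqr_ge0 //.
  have kXi : k (X i.+1) (X i.+1) = 1 by apply: kX; rewrite ltn_ord.
  by have := kle1 (X i.+1) x; have := psd_kernel_geN1 kXi kxx; nra.
have S0 : 0 <= S by rewrite sumr_ge0 // => i _; rewrite sqr_ge0.
have A0 : 0 <= A by apply: Kmat_psd.
have n0 : 0 <= n%:R :> R by rewrite ler0n.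
have T0 : 0 <= T by rewrite TE; nra.
apply/andP; split; last by lra.
rewrite ler_pdivrMr; last by lra.
have : 0 <= T * (n%:R - (n%:R + sigma ^+ 2) * T) by nra.
have [T_gt0|T_lt0|->] := ltrgt0P T; [by rewrite pmulr_rge0 //; nra | lra | lra].
Qed.

Lemma post_sd_bounds sigma X n x : 0 < sigma ->
  (forall j, (1 <= j <= n)%N -> k (X j) (X j) = 1) -> k x x = 1 ->
  [/\ 0 < post_sd k sigma X n x, post_sd k sigma X n x <= 1 &
      sigma ^+ 2 / (n%:R + sigma ^+ 2) <= post_sd k sigma X n x ^+ 2].
Proof.
move=> sigma_gt0 kX kxx; have /andP[lb ub] := post_var_bounds sigma_gt0 kX kxx.
have lb_gt0 : 0 < sigma ^+ 2 / (n%:R + sigma ^+ 2).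
  by rewrite divr_gt0 ?exprn_gt0 // ltr_wpDl ?ler0n ?exprn_gt0.
have var_gt0 := lt_le_trans lb_gt0 lb.
rewrite /post_sd sqrtr_gt0 var_gt0 sqr_sqrtr ?(ltW var_gt0) //.
by split => //; rewrite -sqrtr1 ler_wsqrtr.
Qed.

End PosteriorVariance.

Section StandardNormal.
Variable R : realType.

Lemma phiE (z : R) : phi z = normal_peak 1 * expR (- z ^+ 2 / 2).
Proof. by rewrite /phi normal_pdfE ?oner_eq0 //= /normal_fun subr0 expr1n. Qed.

Lemma phi0E : phi 0 = normal_peak (1 : R).
Proof. by rewrite phiE expr0n /= oppr0 mul0r expR0 mulr1. Qed.

Lemma normal_peak1_sqr : 2 * pi * normal_peak (1 : R) ^+ 2 = 1.
Proof.
rewrite /normal_peak expr1n mul1r exprVn sqr_sqrtr; last by rewrite mulrn_wge0 ?pi_ge0.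
by rewrite mulr_natl divff // gt_eqF // pmulrn_lgt0 ?pi_gt0.
Qed.

Lemma normal_peak1_ge : 7/20 <= normal_peak (1 : R).
Proof.
have := normal_peak1_sqr; have := @pihalf_lt2 R; have := @pi_ge2 R.
have := normal_peak_gt0 (oner_neq0 R); set p := normal_peak 1 => p_gt0 *.
have : 1 < 8 * p ^+ 2 by nra.
nra.
Qed.

Lemma Phi_ge0_le1 (z : R) : 0 <= Phi z <= 1.
Proof.
rewrite /Phi; set P := normal_prob 0 1 _.
have : (P <= 1)%E by apply: probability_le1; apply: measurable_itv.
have : (0 <= P)%E by apply: measure_ge0.
by clearbody P; case: P => //= x; rewrite !lee_fin => -> ->.
Qed.

(* Dominate the density on [z, +oo) by [expR (- z^2 / 2)] times the normal
   density centred at [z]. *)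
Lemma normal_prob_tail_le (z : R) : 0 <= z ->
  (normal_prob 0 1 (~` `]-oo, z]) <= (expR (- z ^+ 2 / 2))%:E)%E.
Proof.
move=> z_ge0.
have mC : measurable (~` `]-oo, z] : set R) by apply: measurableC; apply: measurable_itv.
set e := expR (- z ^+ 2 / 2).
have mpdf (m : R) := measurable_int _ (integrable_normal_pdf m 1).
rewrite /normal_prob.
apply: (@le_trans _ _ (\int[lebesgue_measure]_(x in ~` `]-oo, z])
                         (e%:E * (normal_pdf z 1 x)%:E))%E).
  apply: ge0_le_integral => //.
  - by move=> x _; rewrite lee_fin normal_pdf_ge0.
  - by apply: (measurable_funS _ _ (mpdf 0)).
  - by apply: (measurable_funS _ _ (measurable_funeM e%:E (mpdf z))).
  move=> x /=; rewrite in_itv /= => /negP; rewrite -ltNge => zx.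
  rewrite -EFinM lee_fin !normal_pdfE ?oner_eq0 //= /normal_fun /e.
  rewrite mulrCA ler_pM2l ?normal_peak_gt0 ?oner_eq0 // -expRD ler_expR.
  by rewrite subr0 expr1n; nra.
apply: (@le_trans _ _ (\int[lebesgue_measure]_(x in [set: R])
                         (e%:E * (normal_pdf z 1 x)%:E))%E).
  apply: ge0_subset_integral => //; first exact: measurable_funeM (mpdf z).
  by move=> x _; rewrite -EFinM lee_fin mulr_ge0 ?expR_ge0 ?normal_pdf_ge0.
rewrite ge0_integralZl_EFin ?expR_ge0 //; first by rewrite integral_normal_pdf mule1.
by move=> x _; rewrite lee_fin normal_pdf_ge0.
Qed.

Lemma Phi_tail_le (z : R) : 0 <= z -> 1 - Phi z <= expR (- z ^+ 2 / 2).
Proof.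
move=> z_ge0; have mI : measurable (`]-oo, z] : set R) by apply: measurable_itv.
have tail : (1 - normal_prob 0 1 `]-oo, z] <= (expR (- z ^+ 2 / 2))%:E)%E.
  by rewrite -probability_setC //; apply: normal_prob_tail_le.
have : (normal_prob 0 1 `]-oo, z] <= 1)%E by apply: probability_le1.
have : (0 <= normal_prob 0 1 `]-oo, z])%E by apply: measure_ge0.
by move: tail; rewrite /Phi; case: (normal_prob 0 1 `]-oo, z]).
Qed.

Lemma sqr_1Dsqr_le_expR (z : R) : (1 + z ^+ 2 / 4) ^+ 2 <= expR (z ^+ 2 / 2).
Proof.
have -> : z ^+ 2 / 2 = z ^+ 2 / 4 * 2%:R by lra.
rewrite expRM_natr lerXn2r ?nnegrE ?expR_ge0 ?expR_ge1Dx //.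
by have := sqr_ge0 z; lra.
Qed.

(* The coarse tail bound [1 - Phi z <= expR (- z^2 / 2)] reduces this to
   [(z - 7/20) expR (- z^2 / 2) <= 518/1000], and the polynomial certificate
   below shows [z - 7/20 <= 518/1000 (1 + z^2/4)^2]. *)
Lemma tail_gap_le (z : R) : 0 < z -> z * (1 - Phi z) - phi z <= 518/1000.
Proof.
move=> z_gt0; have := sqr_1Dsqr_le_expR z; have := Phi_tail_le (ltW z_gt0).
rewrite phiE; set e := expR (- z ^+ 2 / 2); set E := expR (z ^+ 2 / 2).
move=> tail E_ge; have peak := normal_peak1_ge.
have e_gt0 : 0 < e by apply: expR_gt0.
have eE : e * E = 1 by rewrite -expRD mulNr addNr expR0.
have poly : z - 7/20 <= 518/1000 * (1 + z ^+ 2 / 4) ^+ 2.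
  by have := sqr_ge0 (2849/4000 * z - 1); have := sqr_ge0 (z ^+ 2 - 3/2); lra.
have : z * (1 - Phi z) <= z * e by rewrite ler_pM2l.
have : (z - 7/20) * e <= 518/1000 * (1 + z ^+ 2 / 4) ^+ 2 * e by rewrite ler_pM2r.
have : (1 + z ^+ 2 / 4) ^+ 2 * e <= E * e by rewrite ler_pM2r.
nra.
Qed.

End StandardNormal.

Section ExpectedImprovement.
Variable R : realType.

Definition ei (xi m s : R) : R :=
  (xi - m) * Phi ((xi - m) / s) + s * phi ((xi - m) / s).

Lemma EIE d k sigma (X : nat -> 'rV[R]_d) y n x :
  EI k sigma X y n x =
  ei (incumbent k sigma X y n) (post_mean k sigma X y n x) (post_sd k sigma X n x).
Proof. by []. Qed.

Lemma c_alphaE : c_alpha = 1 + 328/1000 :> R.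
Proof. by rewrite /c_alpha; lra. Qed.

Lemma incumbent_gap_le (xi m s b : R) : 0 < s -> 79/50 <= b ->
  xi - m <= ei xi m s + (c_alpha - 1) * b * s.
Proof.
move=> s_gt0 b_ge; rewrite /ei c_alphaE; set z := (xi - m) / s.
have az : xi - m = z * s by rewrite /z divfK ?gt_eqF.
have /andP[Phi_ge0 Phi_le1] := Phi_ge0_le1 z.
have phi_ge0 : 0 <= phi z by apply: normal_pdf_ge0.
have b_s : 518/1000 * s <= 328/1000 * b * s by nra.
have [z_le0|z_gt0] := lerP z 0.
  have zs_le0 : z * s <= 0 by nra.
  by rewrite az; nra.
have := tail_gap_le z_gt0; rewrite -(ler_pM2l s_gt0) az; lra.
Qed.

Lemma abs_le_sqrt_ln_inv (z v : R) : 0 < v -> v <= expR (- z ^+ 2) ->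
  `|z| <= Num.sqrt (ln v^-1).
Proof.
move=> v_gt0 v_le; rewrite -sqrtr_sqr ler_wsqrtr // lnV ?posrE // lerNr.
by rewrite -[- _]expRK ler_ln ?posrE ?expR_gt0.
Qed.

(* When the incumbent is attained at a point with posterior deviation [s'],
   [ei xi m s >= s' phi 0] forces [z = (xi - m) / s] to satisfy
   [s'^2 <= expR (- z^2)], which bounds [|z|]. *)
Lemma mean_gap_add_ei_le (xi m s s' v : R) : 0 < s -> s <= 1 ->
  0 < v -> 0 <= s' -> v <= s' ^+ 2 -> s' * phi 0 <= ei xi m s ->
  m - xi + ei xi m s <= (Num.sqrt (ln v^-1) + phi 0) * s.
Proof.
move=> s_gt0 s_le1 v_gt0 s'_ge0 v_le; rewrite /ei phi0E phiE.
set z := (xi - m) / s; set p := normal_peak 1; set e := expR (- z ^+ 2 / 2).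
have az : xi - m = z * s by rewrite /z divfK ?gt_eqF.
have /andP[Phi_ge0 Phi_le1] := Phi_ge0_le1 z.
have p_gt0 : 0 < p by apply: normal_peak_gt0; rewrite oner_eq0.
have e_gt0 : 0 < e by apply: expR_gt0.
have e_le1 : e <= 1 by rewrite expR_le1; have := sqr_ge0 z; lra.
have sqrt_ge0 := sqrtr_ge0 (ln v^-1).
have maz : m - xi = - (z * s) by rewrite -az opprB.
have spe_le : s * (p * e) <= p * s by rewrite mulrC ler_pM2r // -[X in _ <= X]mulr1 ler_pM2l.
rewrite az maz => ei_ge.
have [z_ge0|z_lt0] := lerP 0 z.
  have : 0 <= z * s by apply: mulr_ge0 z_ge0 (ltW s_gt0).
  by nra.
have zs_lt0 : z * s < 0 by nra.
have zsPhi_le0 : z * s * Phi z <= 0 by nra.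
have s'_le : s' <= e.
  rewrite -(ler_pM2r p_gt0); apply: le_trans ei_ge _.
  have : 0 < p * e by apply: mulr_gt0.
  by nra.
have abs_z : `|z| <= Num.sqrt (ln v^-1).
  apply: abs_le_sqrt_ln_inv => //; apply: (le_trans v_le).
  have -> : - z ^+ 2 = - z ^+ 2 / 2 * 2%:R by rewrite mulfVK ?pnatr_eq0.
  by rewrite expRM_natr lerXn2r ?nnegrE ?(ltW e_gt0).
have : - z * s <= Num.sqrt (ln v^-1) * s.
  by rewrite ler_pM2r //; apply: le_trans abs_z; rewrite -normrN ler_norm.
nra.
Qed.

End ExpectedImprovement.

Section Constants.
Variable R : realType.

Lemma expR_quarter_le : expR (1/4 : R) <= 4/3.
Proof.
have := expR_ge1Dx (- (1/4) : R); have := expR_gt0 (- (1/4) : R).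
rewrite -[expR (1/4)]invrK -expRN; set q := expR _ => q_gt0 q_ge.
by rewrite -[4/3](@invrK R) lef_pV2 ?posrE ?invr_gt0 //; lra.
Qed.

Lemma expR_5quarters_le : expR (5/4 : R) <= 16/3.
Proof.
have -> : (5/4 : R) = 1/4 * 5%:R by lra.
rewrite expRM_natr; apply: (@le_trans _ _ ((4/3) ^+ 5)); last by rewrite !exprS expr0; lra.
by rewrite lerXn2r ?nnegrE ?expR_ge0 ?expR_quarter_le //; lra.
Qed.

Lemma sqrt_beta_ge (card : nat) (delta : R) (t : nat) :
  (0 < card)%N -> 0 < delta < 1 -> (0 < t)%N -> 79/50 <= Num.sqrt (beta card delta t).
Proof.
move=> card_gt0 /andP[delta_gt0 delta_lt1] t_gt0.
have card_ge1 : 1 <= card%:R :> R by rewrite ler1n.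
have t_ge1 : 1 <= t%:R :> R by rewrite ler1n.
have pi_t_ge : 2/3 <= pi_t t :> R.
  have : 4 <= pi ^+ 2 :> R by have := @pi_ge2 R; nra.
  have : 1 <= t%:R ^+ 2 :> R by nra.
  by rewrite /pi_t; nra.
have arg_ge : 16/3 <= 8 * card%:R * pi_t t / delta.
  by rewrite ler_pdivlMr //; nra.
have ln_ge : 5/4 <= ln (8 * card%:R * pi_t t / delta).
  rewrite -[5/4](@expRK R) ler_ln ?posrE ?expR_gt0 //; last by apply: lt_le_trans arg_ge; lra.
  exact: le_trans expR_5quarters_le arg_ge.
have -> : 79/50 = Num.sqrt ((79/50) ^+ 2) :> R by rewrite sqrtr_sqr ger0_norm //; lra.
by rewrite ler_wsqrtr // /beta; lra.
Qed.

Lemma c_muE (sigma : R) (t : nat) : (0 < t)%N ->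
  c_mu sigma t = Num.sqrt (ln ((sigma ^+ 2 / ((t.-1)%:R + sigma ^+ 2))^-1)).
Proof.
move=> t_gt0; rewrite /c_mu phi0E normal_peak1_sqr mul1r invf_div.
by rewrite -[in t%:R](prednK t_gt0) -natr1 addrK.
Qed.

End Constants.

Lemma post_mean0 (R : realType) d k sigma (X : nat -> 'rV[R]_d) y x :
  post_mean k sigma X y 0 x = 0.
Proof. by rewrite /post_mean mxE big_ord0. Qed.

Lemma incumbent_attained (R : realType) d k sigma (X : nat -> 'rV[R]_d) y n :
  (0 < n)%N ->
  exists2 m, (1 <= m <= n)%N & incumbent k sigma X y n = post_mean k sigma X y n (X m).
Proof.
move=> n_gt0; rewrite /incumbent big_seq.
elim/big_rec: _ => [|i v]; first by exists 1%N; rewrite ?leqnn.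
rewrite mem_index_iota ltnS => i_range [m m_range ->].
by rewrite minEle; case: ifP => _; [exists i | exists m].
Qed.

Lemma lipschitz_discretization_gap (R : realType) d (f : 'rV[R]_d -> R) (L e : R) x x' :
  0 < L -> `|f x - f x'| <= L * l1dist x x' -> l1dist x x' <= 1 / (L * e) ->
  f x' - f x <= 1 / e.
Proof.
move=> L_gt0 Lip dist_le.
have : f x' - f x <= L * l1dist x x' by apply: le_trans Lip; rewrite distrC ler_norm.
move/le_trans; apply; apply: le_trans (ler_wpM2l (ltW L_gt0) dist_le) _.
by rewrite !mul1r invfM mulrA mulfV ?gt_eqF // mul1r.
Qed.

Section PosteriorMeanGap.
Variables (R : realType) (d : nat) (C : set 'rV[R]_d).
Variables (k : 'rV[R]_d -> 'rV[R]_d -> R) (sigma : R) (X : nat -> 'rV[R]_d) (y : nat -> R).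
Hypotheses (kpsd : psd_kernel k) (kle1 : forall x x', k x x' <= 1).
Hypotheses (kdiag : forall x, C x -> k x x = 1) (sigma_gt0 : 0 < sigma).

Lemma post_mean_gap_le t xb b : (0 < t)%N ->
  (forall s, (1 <= s <= t)%N -> C (X s)) ->
  ((1 < t)%N -> forall x, C x -> EI k sigma X y t.-1 x <= EI k sigma X y t.-1 (X t)) ->
  C xb -> 79/50 <= b ->
  post_mean k sigma X y t.-1 (X t) - post_mean k sigma X y t.-1 xb <=
    (c_mu sigma t + phi 0) * post_sd k sigma X t.-1 (X t)
    + (c_alpha - 1) * b * post_sd k sigma X t.-1 xb.
Proof.
move=> t_gt0 XC EI_max xbC b_ge.
have kX j : (1 <= j <= t.-1)%N -> k (X j) (X j) = 1.
  by case/andP=> j_ge1 j_le; apply/kdiag/XC; rewrite j_ge1 (leq_trans j_le) ?leq_pred.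
have sd x := post_sd_bounds kpsd kle1 sigma_gt0 kX (kdiag x).
have XtC : C (X t) by apply: XC; rewrite t_gt0 leqnn.
have [sdt_gt0 sdt_le1 _] := sd _ XtC.
have [sdb_gt0 _ _] := sd _ xbC.
have phi0_ge0 : 0 <= phi (0 : R) by apply: normal_pdf_ge0.
have slack : 0 <= (c_alpha - 1) * b * post_sd k sigma X t.-1 xb.
  by rewrite c_alphaE addrC addKr; apply: mulr_ge0; [apply: mulr_ge0; lra | exact: ltW].
have [t_gt1|t_le1] := ltnP 1 t; last first.
  have t1 : t.-1 = 0%N by rewrite -subn1; apply/eqP; rewrite subn_eq0.
  have -> : post_mean k sigma X y t.-1 (X t) - post_mean k sigma X y t.-1 xb = 0.
    by rewrite t1 !post_mean0 subrr.
  apply: addr_ge0 _ slack; apply: mulr_ge0 _ (ltW sdt_gt0).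
  by apply: addr_ge0 _ phi0_ge0; apply: sqrtr_ge0.
have t1_gt0 : (0 < t.-1)%N by rewrite ltn_predRL.
have [m m_range incE] := incumbent_attained k sigma X y t1_gt0.
have XmC : C (X m).
  by apply: XC; case/andP: m_range => -> /leq_trans; apply; apply: leq_pred.
have [sdm_gt0 _ sdm_sqr] := sd _ XmC.
have EI_m : EI k sigma X y t.-1 (X m) = post_sd k sigma X t.-1 (X m) * phi 0.
  by rewrite EIE incE /ei subrr !mul0r add0r.
have EI_t_ge := EI_max t_gt1 _ XmC; rewrite EI_m EIE in EI_t_ge.
have v_gt0 : 0 < sigma ^+ 2 / ((t.-1)%:R + sigma ^+ 2).
  by rewrite divr_gt0 ?exprn_gt0 // ltr_wpDl ?ler0n ?exprn_gt0.
have := mean_gap_add_ei_le sdt_gt0 sdt_le1 v_gt0 (ltW sdm_gt0) sdm_sqr EI_t_ge.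
rewrite -c_muE //.
have := incumbent_gap_le (incumbent k sigma X y t.-1) (post_mean k sigma X y t.-1 xb) sdb_gt0 b_ge.
have := EI_max t_gt1 _ xbC; rewrite !EIE.
lra.
Qed.

End PosteriorMeanGap.

Theorem mainTheorem6 (R : realType) (d : nat) (r : R) (C : set 'rV[R]_d)
  (k : 'rV[R]_d -> 'rV[R]_d -> R) (L : R) (f : 'rV[R]_d -> R) (xstar : 'rV[R]_d)
  (sigma : R) (X : nat -> 'rV[R]_d) (eps y : nat -> R) (delta : R) (t : nat)
  (Ct : seq 'rV[R]_d) (proj : 'rV[R]_d -> 'rV[R]_d) :
  (* setting *)
  (0 < d)%N -> 0 < r ->
  (forall x, C x -> forall i, 0 <= x 0 i <= r) ->
  compact C ->
  psd_kernel k ->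
  (forall x x', k x x' <= 1) ->
  (forall x, C x -> k x x = 1) ->
  L >= 1 / (r * d%:R) ->
  (forall x x', C x -> C x' -> `|f x - f x'| <= L * l1dist x x') ->
  C xstar -> (forall x, C x -> f xstar <= f x) ->
  0 < sigma ->
  (forall i, y i = f (X i) + eps i) ->
  (* GP-EI with BSPMI: x_s in argmax_C EI_{s-1} *)
  (forall s, (1 <= s <= t)%N -> C (X s)) ->
  (forall s, (2 <= s <= t)%N -> forall x, C x ->
      EI k sigma X y s.-1 x <= EI k sigma X y s.-1 (X s)) ->
  0 < delta < 1 ->
  (1 <= t)%N ->
  (* discretization C_t and [x]_t *)
  (forall c, c \in Ct -> C c) -> uniq Ct ->
  (size Ct)%:R = (L * r * d%:R * t%:R ^+ 2) ^+ d ->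
  (forall x, C x -> proj x \in Ct /\ l1dist x (proj x) <= 1 / (L * t%:R ^+ 2) /\
      (forall c, c \in Ct -> l1dist x (proj x) <= l1dist x c)) ->
  (* event E^r(t) *)
  (let bt := beta (size Ct) delta t in
   (forall c, c \in Ct -> `|f c - post_mean k sigma X y t.-1 c|
                          <= Num.sqrt bt * post_sd k sigma X t.-1 c) /\
   `|f (X t) - post_mean k sigma X y t.-1 (X t)|
      <= Num.sqrt bt * post_sd k sigma X t.-1 (X t) /\
   ((1 < t)%N -> `|f (X t.-1) - post_mean k sigma X y t.-1 (X t.-1)|
      <= Num.sqrt bt * post_sd k sigma X t.-1 (X t.-1))) ->
  (* conclusion *)
  let bt := beta (size Ct) delta t in
  f (X t) - f xstar <=
    (c_mu sigma t + phi 0 + 2 * Num.sqrt bt) * post_sd k sigma X t.-1 (X t)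
    + c_alpha * Num.sqrt bt * post_sd k sigma X t.-1 (proj xstar)
    + 1 / (t%:R ^+ 2).
Proof.
move=> d_gt0 r_gt0 _ _ kpsd kle1 kdiag L_ge Lip xstarC _ sigma_gt0 _ XC EI_max
  delta01 t_gt0 CtC _ _ projP [conf_Ct [conf_Xt _]].
rewrite [is_true _]/=; set bt := beta (size Ct) delta t in conf_Ct conf_Xt *.
have [xbCt [xb_dist _]] := projP _ xstarC.
have xbC := CtC _ xbCt.
have L_gt0 : 0 < L by apply: lt_le_trans L_ge; rewrite divr_gt0 ?mulr_gt0 ?ltr0n.
have disc_gap := lipschitz_discretization_gap L_gt0 (Lip _ _ xstarC xbC) xb_dist.
have b_ge : 79/50 <= Num.sqrt bt by apply: sqrt_beta_ge => //; case: (Ct) xbCt.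
have EI_max_t : (1 < t)%N -> forall x, C x ->
    EI k sigma X y t.-1 x <= EI k sigma X y t.-1 (X t).
  by move=> t_gt1; apply: EI_max; rewrite t_gt1 leqnn.
have mean_gap := post_mean_gap_le kpsd kle1 kdiag sigma_gt0 t_gt0 XC EI_max_t xbC b_ge.
have sd_ge0 : 0 <= post_sd k sigma X t.-1 (X t) by apply: sqrtr_ge0.
have := mulr_ge0 (sqrtr_ge0 bt) sd_ge0.
move: (conf_Ct _ xbCt) conf_Xt; rewrite !ler_norml => /andP[conf_xb _] /andP[_ conf_Xt].
lra.
Qed.
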